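(* Let $\mathbb{C}$ be a category of interest and $A\in\mathbb{C}$. If $A$ has an actor in $\mathbb{C}$, then $\mathfrak{B}(A)=\mathrm{Actor}(A)$ (i.e. $\mathfrak{B}(A)$ is isomorphic to $\mathrm{Actor}(A)$, via the homomorphism sending an element $c$ of $\mathrm{Actor}(A)$ to the family of maps $a\mapsto c\cdot a$, $a\mapsto c*a$).
   Context: Category of interest. A category of groups with operations is a variety of universal algebras with a set of operations $\Omega=\Omega_0\cup\Omega_1\cup\Omega_2$ ($\Omega_i$ = set of $i$-ary operations) and a set of identities $\mathbb{E}$ such that: $\mathbb{E}$ contains the group laws; the group operations, written additively $0,-,+$ (addition not necessarily commutative), lie in $\Omega_0,\Omega_1,\Omega_2$ respectively, and $\Omega_0=\{0\}$; putting $\Omega_2'=\Omega_2\setminus\{+\}$ and $\Omega_1'=\Omega_1\setminus\{-\}$, whenever $*\in\Omega_2'$ also $*^\circ\in\Omega_2'$, where $x*^\circ y=y*x$; $\mathbb{E}$ contains $x*(y+z)=x*y+x*z$ for each $*\in\Omega_2'$, and $\omega(x+y)=\omega(x)+\omega(y)$, $\omega(x)*y=\omega(x*y)$ for each $\omega\in\Omega_1'$, $*\in\Omega_2'$. A category of interest $\mathbb{C}=(\Omega,\mathbb{E})$ is such a variety which also satisfies: (Axiom 1) $x_1+(x_2*x_3)=(x_2*x_3)+x_1$ for each $*\in\Omega_2'$; (Axiom 2) for each ordered pair $( *,\bar* )\in\Omega_2'\times\Omega_2'$ there is a word $W$ with $(x_1*x_2)\bar*x_3=W\big(x_1(x_2x_3),x_1(x_3x_2),(x_2x_3)x_1,(x_3x_2)x_1,x_2(x_1x_3),x_2(x_3x_1),(x_1x_3)x_2,(x_3x_1)x_2\big)$,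 each juxtaposition standing for some operation in $\Omega_2'$; the right-hand side is denoted $W(x_1,x_2;x_3;*,\bar* )$. Let $\mathbb{E}_G\subseteq\mathbb{E}$ consist of the group laws together with the identities $x*(y+z)=x*y+x*z$, $\omega(x+y)=\omega(x)+\omega(y)$, $\omega(x)*y=\omega(x*y)$, and let $\mathbb{C}_G$ be the variety $(\Omega,\mathbb{E}_G)$. Actions. For objects $A,B$ of $\mathbb{C}$, a split extension $0\to A\to E\xrightarrow{p}B\to 0$ in $\mathbb{C}$ ($p$ surjective with kernel $A$, and a morphism $s$ with $ps=1_B$) induces actions $b\cdot a=s(b)+a-s(b)$ and $b*a=s(b)*a$ ($*\in\Omega_2'$); these are the derived actions of $B$ on $A$ in $\mathbb{C}$ (one writes $a*b:=b*^\circ a$). Crossed modules and actors. A crossed module in $\mathbb{C}$ is a morphism $\partial:C_1\to C_0$ in $\mathbb{C}$ together with a derived action of $C_0$ on $C_1$ in $\mathbb{C}$ such that for all $r\in C_0$, $c,c'\in C_1$, $*\in\Omega_2'$: $\partial(r\cdot c)=r+\partial(c)-r$; $\partial(c)\cdot c'=c+c'-c$; $\partial(c)*c'=c*c'$; $\partial(r*c)=r*\partial(c)$ and $\partial(c*r)=\partial(c)*r$. For $A\in\mathbb{C}$, an actor of $A$ is a crossed module $\partial:A\to\mathrm{Actor}(A)$ in $\mathbb{C}$ such that for every $C\in\mathbb{C}$ and every derived action of $C$ on $A$ in $\mathbb{C}$ there is a unique morphism $\varphi:C\to\mathrm{Actor}(A)$ in $\mathbb{C}$ with $c\cdot a=\varphi(c)\cdot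 a$ and $c*a=\varphi(c)*a$ for all $c\in C$, $a\in A$, $*\in\Omega_2'$. The object $\mathfrak{B}(A)$. Fix $A\in\mathbb{C}$ and let $(B_j)_{j\in J}$ range over all objects of $\mathbb{C}$ equipped with a derived action on $A$ in $\mathbb{C}$ (one index for each split extension of $A$ in $\mathbb{C}$). Consider families $x$ of maps $A\to A$ consisting of a map $a\mapsto x\cdot a$ and maps $a\mapsto x*a$ ($*\in\Omega_2'$). For $b\in B_j$ let $\mathbf{b}$ be the family $a\mapsto b\cdot a$, $a\mapsto b*a$, and let $\mathbb{B}$ be the set of all such $\mathbf b$. Operations on families: for $\mathbf{b}_i,\mathbf{b}_k\in\mathbb{B}$ and $*\in\Omega_2'$, $(\mathbf b_i*\mathbf b_k)\cdot a=a$ and $(\mathbf b_i*\mathbf b_k)\bar*a=W(b_i,b_k;a;*,\bar* )$ for $\bar*\in\Omega_2'$ (the Axiom 2 word evaluated through the given actions), iterated products being defined inductively in the same way via Axiom 2; $(x+y)\cdot a=x\cdot(y\cdot a)$ and $(x+y)*a=x*a+y*a$; for $\omega\in\Omega_1'$, $\omega(\mathbf b_k)$ is the family of $\omega(b_k)$, $\omega(x*y)=\omega(x)*y$, and $\omega$ is additive; $(-\mathbf b_k)\cdot a=(-b_k)\cdot a$, $(-x)*a=-(x*a)$, $(-x)\cdot a=a$ when $x$ is a product, and $-(x_1+\dots+x_n)=-x_n-\dots-x_1$. $\mathfrak{B}(A)$ is the set of all families obtained from $\mathbb{B}$ by iterating these operations, modulo the equivalence $x\sim y$ iff $x\cdot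 a=y\cdot a$, $x*a=y*a$ and $(\omega_1\cdots\omega_n x)\cdot a=(\omega_1\cdots\omega_n y)\cdot a$ for all $a\in A$, $*\in\Omega_2'$, $n\ge1$, $\omega_1,\dots,\omega_n\in\Omega_1'$; it is an $\Omega$-algebra. *)

From Stdlib Require Import List Bool.
Import ListNotations.
Set Implicit Arguments.
Unset Strict Implicit.

(* Signatures.  An Omega-algebra has the group operations 0, -, + plus
   unary operations indexed by O1 (= Omega_1') and binary operations
   indexed by O2 (= Omega_2').  Omega_0 = {0}.                          *)

Inductive term (O1 O2 : Type) : Type :=
| tVar  : nat -> term O1 O2
| tZero : term O1 O2
| tOpp  : term O1 O2 -> term O1 O2
| tAdd  : term O1 O2 -> term O1 O2 -> term O1 O2
| tUn   : O1 -> term O1 O2 -> term O1 O2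
| tBin  : O2 -> term O1 O2 -> term O1 O2 -> term O1 O2.

Record alg (O1 O2 : Type) : Type := Alg {
  car :> Type;
  zero : car;
  opp : car -> car;
  add : car -> car -> car;
  un : O1 -> car -> car;
  bin : O2 -> car -> car -> car }.

Arguments zero {O1 O2} a.
Arguments opp {O1 O2} {a} _.
Arguments add {O1 O2} {a} _ _.
Arguments un {O1 O2} {a} _ _.
Arguments bin {O1 O2} {a} _ _ _.

Fixpoint teval (O1 O2 : Type) (X : alg O1 O2) (v : nat -> X) (t : term O1 O2) : X :=
  match t with
  | tVar _ _ n => v n
  | tZero _ _ => zero X
  | tOpp t1 => opp (teval v t1)
  | tAdd t1 t2 => add (teval v t1) (teval v t2)
  | tUn w t1 => un w (teval v t1)
  | tBin o t1 t2 => bin o (teval v t1) (teval v t2)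
  end.

(* The eight products appearing in Axiom 2, with x1, x2, x3:
   x1(x2x3), x1(x3x2), (x2x3)x1, (x3x2)x1, x2(x1x3), x2(x3x1), (x1x3)x2, (x3x1)x2 *)
Inductive shape : Type :=
| S_1_23 | S_1_32 | S_23_1 | S_32_1 | S_2_13 | S_2_31 | S_13_2 | S_31_2.

(* Group words in those products; an atom [wAtom sh o o'] is the product of
   shape [sh] whose outer juxtaposition is the operation [o] and whose inner
   juxtaposition is the operation [o']. *)
Inductive word (O2 : Type) : Type :=
| wAtom : shape -> O2 -> O2 -> word O2
| wZero : word O2
| wOpp  : word O2 -> word O2
| wAdd  : word O2 -> word O2 -> word O2.

Fixpoint weval (O2 : Type) (X : Type) (z : X) (op : X -> X) (ad : X -> X -> X)
  (g : shape -> O2 -> O2 -> X) (w : word O2) : X :=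
  match w with
  | wAtom sh o o' => g sh o o'
  | wZero _ => z
  | wOpp w1 => op (weval z op ad g w1)
  | wAdd w1 w2 => ad (weval z op ad g w1) (weval z op ad g w2)
  end.

Definition atom_alg (O1 O2 : Type) (X : alg O1 O2) (x1 x2 x3 : X)
  (sh : shape) (o o' : O2) : X :=
  match sh with
  | S_1_23 => bin o x1 (bin o' x2 x3)
  | S_1_32 => bin o x1 (bin o' x3 x2)
  | S_23_1 => bin o (bin o' x2 x3) x1
  | S_32_1 => bin o (bin o' x3 x2) x1
  | S_2_13 => bin o x2 (bin o' x1 x3)
  | S_2_31 => bin o x2 (bin o' x3 x1)
  | S_13_2 => bin o (bin o' x1 x3) x2
  | S_31_2 => bin o (bin o' x3 x1) x2
  end.

(* A (candidate) category of interest: the signature, the set of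
   identities E, the involution * |-> *^o on Omega_2', and the chosen
   Axiom-2 word W(x1,x2;x3;o,obar) for every ordered pair (o, obar) of binary operations. *)
Record coi : Type := CoI {
  O1 : Type;
  O2 : Type;
  circ : O2 -> O2;
  E : term O1 O2 -> term O1 O2 -> Prop;
  W : O2 -> O2 -> word O2 }.

Definition algC (C : coi) := alg (O1 C) (O2 C).

Definition models (C : coi) (X : algC C) : Prop :=
  forall l r, @E C l r -> forall v : nat -> X, teval v l = teval v r.

Definition is_coi (C : coi) : Prop :=
  forall X : algC C, models X ->
  (forall x y z : X, add x (add y z) = add (add x y) z) /\
  (forall x : X, add (zero X) x = x) /\ (forall x : X, add x (zero X) = x) /\
  (forall x : X, add (opp x) x = zero X) /\ (forall x : X, add x (opp x) = zero X) /\
  (forall (o : O2 C) (x y : X), bin (@circ C o) x y = bin o y x) /\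
  (forall (o : O2 C) (x y z : X), bin o x (add y z) = add (bin o x y) (bin o x z)) /\
  (forall (w : O1 C) (x y : X), un w (add x y) = add (un w x) (un w y)) /\
  (forall (w : O1 C) (o : O2 C) (x y : X), bin o (un w x) y = un w (bin o x y)) /\
  (forall (o : O2 C) (x1 x2 x3 : X), add x1 (bin o x2 x3) = add (bin o x2 x3) x1) /\
  (forall (o ob : O2 C) (x1 x2 x3 : X),
     bin ob (bin o x1 x2) x3 =
     weval (zero X) opp add (atom_alg x1 x2 x3) (@W C o ob)).

Definition hom (C : coi) (X Y : algC C) (f : X -> Y) : Prop :=
  f (zero X) = zero Y /\
  (forall x, f (opp x) = opp (f x)) /\
  (forall x y, f (add x y) = add (f x) (f y)) /\
  (forall w x, f (un w x) = un w (f x)) /\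
  (forall o x y, f (bin o x y) = bin o (f x) (f y)).

Definition derived_action (C : coi) (A B : algC C) (dot : B -> A -> A)
  (star : O2 C -> B -> A -> A) : Prop :=
  models A /\ models B /\
  exists (Ex : algC C) (p : Ex -> B) (s : B -> Ex) (i : A -> Ex),
    models Ex /\ hom p /\ hom s /\ hom i /\
    (forall b, exists e, p e = b) /\
    (forall b, p (s b) = b) /\
    (forall a a', i a = i a' -> a = a') /\
    (forall e, p e = zero B <-> exists a, i a = e) /\
    (forall b a, i (dot b a) = add (add (s b) (i a)) (opp (s b))) /\
    (forall o b a, i (star o b a) = bin o (s b) (i a)).

(* Crossed modules in C (a*r is written  r *^o a, i.e. star (circ o) r a) *)
Definition crossed_module (C : coi) (C1 C0 : algC C) (d : C1 -> C0)
  (dot : C0 -> C1 -> C1) (star : O2 C -> C0 -> C1 -> C1) : Prop :=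
  hom d /\ derived_action dot star /\
  (forall r c, d (dot r c) = add (add r (d c)) (opp r)) /\
  (forall c c', dot (d c) c' = add (add c c') (opp c)) /\
  (forall o c c', star o (d c) c' = bin o c c') /\
  (forall o r c, d (star o r c) = bin o r (d c)) /\
  (forall o r c, d (star (@circ C o) r c) = bin o (d c) r).

Definition is_actor (C : coi) (A Act : algC C) (d : A -> Act)
  (dot : Act -> A -> A) (star : O2 C -> Act -> A -> A) : Prop :=
  models Act /\ crossed_module d dot star /\
  forall (X : algC C) (dotX : X -> A -> A) (starX : O2 C -> X -> A -> A),
    derived_action dotX starX ->
    exists! phi : X -> Act,
      hom phi /\ (forall c a, dotX c a = dot (phi c) a) /\
      (forall o c a, starX o c a = star o (phi c) a).

Lemma is_actor_derived (C : coi) (A Act : algC C) d dot star :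
  @is_actor C A Act d dot star -> derived_action dot star.
Proof. intros [_ [[_ [H _]] _]]. exact H. Qed.

(* The object B(A).  Families x of maps A -> A: a map a |-> x.a and maps
   a |-> x*a for every * in Omega_2'  (a*x := x *^o a).                *)
Section BA.
Variables (C : coi) (A : algC C).

Record fam : Type := Fam { fdot : A -> A; fstar : O2 C -> A -> A }.

(* The generators: an element b of some object B of C equipped with a
   derived action on A. *)
Record gen : Type := Gen {
  gB : algC C;
  gdot : gB -> A -> A;
  gstar : O2 C -> gB -> A -> A;
  gder : derived_action gdot gstar;
  gel : gB }.

Inductive bexpr : Type :=
| BGen  : gen -> bexpr
| BZero : bexpr
| BOpp  : bexpr -> bexpr
| BAdd  : bexpr -> bexpr -> bexpr
| BUn   : O1 C -> bexpr -> bexpr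
| BBin  : O2 C -> bexpr -> bexpr -> bexpr.

(* unary contexts: [u1; ...; un] stands for u1(u2(...un(_))),
   None = negation, Some w = the operation w in Omega_1' *)
Fixpoint apply_ctx (B : algC C) (c : list (option (O1 C))) (b : B) : B :=
  match c with
  | [] => b
  | None :: c' => opp (apply_ctx c' b)
  | Some w :: c' => un w (apply_ctx c' b)
  end.

Definition negs (c : list (option (O1 C))) : nat :=
  length (filter (fun u => match u with None => true | Some _ => false end) c).
Definition omegas (c : list (option (O1 C))) : list (option (O1 C)) :=
  filter (fun u => match u with None => false | Some _ => true end) c.

Definition gen_fam (g : gen) (c : list (option (O1 C))) : fam :=
  Fam (@gdot g (apply_ctx c (@gel g))) (fun o => @gstar g o (apply_ctx c (@gel g))).

Definition fam_zero : fam := Fam (fun a => a) (fun _ _ => zero A).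
Definition fam_sum (x y : fam) : fam :=
  Fam (fun a => fdot x (fdot y a)) (fun o a => add (fstar x o a) (fstar y o a)).
Definition fam_negp (x : fam) : fam :=
  Fam (fun a => a) (fun o a => opp (fstar x o a)).

Definition lact (x : fam) (o : O2 C) (a : A) : A := fstar x o a.
Definition ract (a : A) (o : O2 C) (x : fam) : A := fstar x (@circ C o) a.

Definition atom_fam (x y : fam) (a : A) (sh : shape) (o o' : O2 C) : A :=
  match sh with
  | S_1_23 => lact x o (lact y o' a)
  | S_1_32 => lact x o (ract a o' y)
  | S_23_1 => ract (lact y o' a) o x
  | S_32_1 => ract (ract a o' y) o x
  | S_2_13 => lact y o (lact x o' a)
  | S_2_31 => lact y o (ract a o' x)
  | S_13_2 => ract (lact x o' a) o y
  | S_31_2 => ract (ract a o' x) o y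
  end.

Definition fam_prod (o : O2 C) (x y : fam) : fam :=
  Fam (fun a => a)
      (fun ob a => weval (zero A) opp add (atom_fam x y a) (@W C o ob)).

(* The family of maps attached to c(e) for a unary context c, following the
   rules: omega and - are computed in B_j on generators; omega and - are
   additive (with -(x+y) = -y-x); omega(x*y) = omega(x)*y; products are
   negated by fam_negp. *)
Fixpoint fam_ctx (c : list (option (O1 C))) (e : bexpr) {struct e} : fam :=
  match e with
  | BGen g => gen_fam g c
  | BZero => fam_zero
  | BOpp e1 => fam_ctx (c ++ [None]) e1
  | BUn w e1 => fam_ctx (c ++ [Some w]) e1
  | BAdd e1 e2 =>
      if Nat.odd (negs c) then fam_sum (fam_ctx c e2) (fam_ctx c e1)
      else fam_sum (fam_ctx c e1) (fam_ctx c e2)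
  | BBin o e1 e2 =>
      Nat.iter (negs c) fam_negp (fam_prod o (fam_ctx (omegas c) e1) (fam_ctx [] e2))
  end.

Definition fam_of (e : bexpr) : fam := fam_ctx [] e.

(* The equivalence ~ defining B(A) = bexpr / ~ *)
Definition bsim (x y : bexpr) : Prop :=
  (forall a, fdot (fam_of x) a = fdot (fam_of y) a) /\
  (forall o a, fstar (fam_of x) o a = fstar (fam_of y) o a) /\
  (forall ws : list (O1 C), ws <> [] -> forall a,
     fdot (fam_ctx (map Some ws) x) a = fdot (fam_ctx (map Some ws) y) a).

End BA.

Arguments BZero {C A}.

Definition actor_to_B (C : coi) (A Act : algC C) (d : A -> Act)
  (dot : Act -> A -> A) (star : O2 C -> Act -> A -> A)
  (H : is_actor d dot star) (c : Act) : bexpr A :=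
  BGen (Gen (is_actor_derived H) c).

(* f : X -> B(A) induces an isomorphism of Omega-algebras X ~= B(A) = bexpr/~ :
   it is a homomorphism up to ~, injective modulo ~, and surjective onto the
   ~-classes. *)
Definition iso_onto_B (C : coi) (A X : algC C) (f : X -> bexpr A) : Prop :=
  bsim (f (zero X)) BZero /\
  (forall x, bsim (f (opp x)) (BOpp (f x))) /\
  (forall x y, bsim (f (add x y)) (BAdd (f x) (f y))) /\
  (forall w x, bsim (f (un w x)) (BUn w (f x))) /\
  (forall o x y, bsim (f (bin o x y)) (BBin o (f x) (f y))) /\
  (forall x y, bsim (f x) (f y) -> x = y) /\
  (forall e : bexpr A, exists x, bsim (f x) e).

(* Every element of B(A) is built from elements b of objects acting on A, and by the universal
   property of the actor each such b acts exactly like some element of Actor(A); since the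
   operations on families mirror the Omega-operations of Actor(A), every family in B(A) is the
   family of an element of Actor(A).  Conversely two elements with equal families differ by an
   element k acting trivially on A; such elements form a subobject K of Actor(A), and the
   inclusion of K and the zero morphism both induce the trivial action of K on A, so the
   uniqueness clause of the universal property forces k = 0. *)
From Stdlib Require Import List PeanoNat ProofIrrelevance.
Import ListNotations.
Set Implicit Arguments.

Existing Class is_coi.
Existing Class models.

Section ModelLaws.
Context {C : coi} `{HC : is_coi C} {X : algC C} `{HX : models C X}.
Implicit Types x y z : X.

Lemma addA x y z : add x (add y z) = add (add x y) z. Proof. now apply HC. Qed.
Lemma add0x x : add (zero X) x = x. Proof. now apply HC. Qed.
Lemma addx0 x : add x (zero X) = x. Proof. now apply HC. Qed.
Lemma addNx x : add (opp x) x = zero X. Proof. now apply HC. Qed.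
Lemma addxN x : add x (opp x) = zero X. Proof. now apply HC. Qed.
Lemma bin_circ o x y : bin (circ o) x y = bin o y x. Proof. now apply HC. Qed.
Lemma binDr o x y z : bin o x (add y z) = add (bin o x y) (bin o x z). Proof. now apply HC. Qed.
Lemma unD w x y : un w (add x y) = add (un w x) (un w y). Proof. now apply HC. Qed.
Lemma bin_unl w o x y : bin o (un w x) y = un w (bin o x y). Proof. now apply HC. Qed.
Lemma add_binC o x y z : add x (bin o y z) = add (bin o y z) x. Proof. now apply HC. Qed.
Lemma bin_binl o ob x y z :
  bin ob (bin o x y) z = weval (zero X) opp add (atom_alg x y z) (W o ob).
Proof. now apply HC. Qed.

Lemma addKx x y : add (opp x) (add x y) = y.
Proof. now rewrite addA, addNx, add0x. Qed.

Lemma addNKx x y : add x (add (opp x) y) = y.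
Proof. now rewrite addA, addxN, add0x. Qed.

Lemma opp_unique x y : add x y = zero X -> y = opp x.
Proof. intros Hxy. now rewrite <- (addKx x y), Hxy, addx0. Qed.

Lemma idem_eq0 x : add x x = x -> x = zero X.
Proof. intros Hx. now rewrite <- (addKx x x), Hx, addNx. Qed.

Lemma sub_eq0 x y : add x (opp y) = zero X -> x = y.
Proof. intros Hxy. now rewrite <- (addx0 x), <- (addNx y), addA, Hxy, add0x. Qed.

Lemma opp0 : opp (zero X) = zero X.
Proof. symmetry. apply opp_unique, addx0. Qed.

Lemma oppK x : opp (opp x) = x.
Proof. symmetry. apply opp_unique, addNx. Qed.

Lemma oppD x y : opp (add x y) = add (opp y) (opp x).
Proof. symmetry. apply opp_unique. now rewrite <- addA, addNKx, addxN. Qed.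

Lemma un0 w : un w (zero X) = zero X.
Proof. apply idem_eq0. now rewrite <- unD, add0x. Qed.

Lemma unN w x : un w (opp x) = opp (un w x).
Proof. apply opp_unique. now rewrite <- unD, addxN, un0. Qed.

Lemma bin0r o x : bin o x (zero X) = zero X.
Proof. apply idem_eq0. now rewrite <- binDr, add0x. Qed.

Lemma bin0l o x : bin o (zero X) x = zero X.
Proof. now rewrite <- bin_circ, bin0r. Qed.

Lemma binNr o x y : bin o x (opp y) = opp (bin o x y).
Proof. apply opp_unique. now rewrite <- binDr, addxN, bin0r. Qed.

Lemma binNl o x y : bin o (opp x) y = opp (bin o x y).
Proof. now rewrite <- bin_circ, binNr, bin_circ. Qed.

Lemma binDl o x y z : bin o (add x y) z = add (bin o x z) (bin o y z).
Proof. now rewrite <- bin_circ, binDr, !bin_circ. Qed.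

Lemma weval_zero (w : word (O2 C)) : weval (zero X) opp add (fun _ _ _ => zero X) w = zero X.
Proof.
  induction w as [| |w IH|w1 IH1 w2 IH2]; simpl; trivial.
  - now rewrite IH, opp0.
  - now rewrite IH1, IH2, add0x.
Qed.

Lemma un_iter_opp n w x : un w (Nat.iter n opp x) = Nat.iter n opp (un w x).
Proof. induction n as [|n IH]; simpl; now rewrite ?unN, ?IH. Qed.

Lemma apply_ctx_zero c : apply_ctx c (zero X) = zero X.
Proof. induction c as [|[w|] c IH]; simpl; now rewrite ?IH, ?un0, ?opp0. Qed.

Lemma apply_ctx_add c x y :
  apply_ctx c (add x y) =
  if Nat.odd (negs c) then add (apply_ctx c y) (apply_ctx c x)
  else add (apply_ctx c x) (apply_ctx c y).
Proof.
  induction c as [|[w|] c IH]; simpl; trivial.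
  - change (negs (Some w :: c)) with (negs c).
    rewrite IH. destruct (Nat.odd (negs c)); apply unD.
  - change (negs (None :: c)) with (S (negs c)).
    rewrite Nat.odd_succ, <- Nat.negb_odd, IH.
    destruct (Nat.odd (negs c)); apply oppD.
Qed.

Lemma apply_ctx_bin c o x y :
  apply_ctx c (bin o x y) = bin o (Nat.iter (negs c) opp (apply_ctx (omegas c) x)) y.
Proof.
  induction c as [|[w|] c IH]; simpl; trivial.
  - now rewrite IH, <- bin_unl, un_iter_opp.
  - now rewrite IH, binNl.
Qed.

Lemma apply_omegas_add ws x y :
  apply_ctx (map Some ws) (add x y) = add (apply_ctx (map Some ws) x) (apply_ctx (map Some ws) y).
Proof. induction ws as [|w ws IH]; simpl; now rewrite ?IH, ?unD. Qed.

Lemma apply_omegas_opp ws x : apply_ctx (map Some ws) (opp x) = opp (apply_ctx (map Some ws) x).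
Proof. induction ws as [|w ws IH]; simpl; now rewrite ?IH, ?unN. Qed.

End ModelLaws.

Lemma apply_ctx_app {C : coi} {X : algC C} c c' (x : X) :
  apply_ctx (c ++ c') x = apply_ctx c (apply_ctx c' x).
Proof. induction c as [|[w|] c IH]; simpl; now rewrite ?IH. Qed.

Lemma hom_apply_ctx {C : coi} {X Y : algC C} (f : X -> Y) c x :
  hom f -> f (apply_ctx c x) = apply_ctx c (f x).
Proof.
  intros (_ & fN & _ & fU & _).
  induction c as [|[w|] c IH]; simpl; now rewrite ?fN, ?fU, ?IH.
Qed.

Lemma weval_ext (O2 X : Type) z op ad (g g' : shape -> O2 -> O2 -> X) w :
  (forall sh o o', g sh o o' = g' sh o o') -> weval z op ad g w = weval z op ad g' w.
Proof. intros Hg. induction w; simpl; congruence. Qed.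

Lemma weval_hom {C : coi} {X Y : algC C} (f : X -> Y) g (w : word (O2 C)) :
  hom f -> f (weval (zero X) opp add g w) = weval (zero Y) opp add (fun sh o o' => f (g sh o o')) w.
Proof. intros (f0 & fN & fD & _). induction w; simpl; congruence. Qed.

Section Families.
Context {C : coi} {A : algC C}.

Definition fam_eq (x y : fam A) : Prop :=
  (forall a, fdot x a = fdot y a) /\ (forall o a, fstar x o a = fstar y o a).

Lemma fam_eq_refl x : fam_eq x x.
Proof. now split. Qed.

Lemma fam_eq_trans x y z : fam_eq x y -> fam_eq y z -> fam_eq x z.
Proof. intros [Hd Hs] [Hd' Hs']. split; congruence. Qed.

Lemma fam_sum_eq x x' y y' : fam_eq x x' -> fam_eq y y' -> fam_eq (fam_sum x y) (fam_sum x' y').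
Proof. intros [Hd Hs] [Hd' Hs']. split; simpl; congruence. Qed.

Lemma fam_negp_eq x x' : fam_eq x x' -> fam_eq (fam_negp x) (fam_negp x').
Proof. intros [_ Hs]. split; simpl; congruence. Qed.

Lemma fam_prod_eq o x x' y y' : fam_eq x x' -> fam_eq y y' -> fam_eq (fam_prod o x y) (fam_prod o x' y').
Proof.
  intros [_ Hs] [_ Hs']. split; intros; simpl; trivial.
  apply weval_ext. intros [] o1 o2; unfold atom_fam, lact, ract; now rewrite ?Hs, ?Hs'.
Qed.

End Families.

Definition action_fam {C : coi} {A B : algC C} (dot : B -> A -> A)
  (star : O2 C -> B -> A -> A) (u : B) : fam A :=
  Fam (dot u) (fun o => star o u).

Section DerivedAction.
Context {C : coi} `{HC : is_coi C} {A B : algC C}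
  {dot : B -> A -> A} {star : O2 C -> B -> A -> A} (HD : derived_action dot star).

Let HA : models A := proj1 HD.
Let HB : models B := proj1 (proj2 HD).
Existing Instances HA HB.

Local Notation F := (action_fam dot star).

Ltac split_extension :=
  destruct (proj2 (proj2 HD)) as (Ex & p & s & i & HEx & _ & Hs & Hi & _ & _ & i_inj & _ & Hdot & Hstar);
  destruct Hs as (s0 & sN & sD & sU & sB);
  destruct Hi as (i0 & iN & iD & iU & iB);
  apply i_inj.

Lemma action_dot0 a : dot (zero B) a = a.
Proof. split_extension. now rewrite Hdot, s0, opp0, add0x, addx0. Qed.

Lemma action_dotD u v a : dot (add u v) a = dot u (dot v a).
Proof. split_extension. now rewrite !Hdot, sD, oppD, !addA. Qed.

Lemma action_dotNK u a : dot u (dot (opp u) a) = a.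
Proof. split_extension. now rewrite !Hdot, sN, oppK, <- !addA, addNKx, addxN, addx0. Qed.

Lemma action_dot_bin o u v a : dot (bin o u v) a = a.
Proof. split_extension. now rewrite Hdot, sB, <- add_binC, <- addA, addxN, addx0. Qed.

Lemma action_star0l o a : star o (zero B) a = zero A.
Proof. split_extension. now rewrite Hstar, s0, bin0l, i0. Qed.

Lemma action_star0r o u : star o u (zero A) = zero A.
Proof. split_extension. now rewrite Hstar, i0, bin0r. Qed.

Lemma action_starD o u v a : star o (add u v) a = add (star o u a) (star o v a).
Proof. split_extension. now rewrite iD, !Hstar, sD, binDl. Qed.

Lemma action_starN o u a : star o (opp u) a = opp (star o u a).
Proof. split_extension. now rewrite iN, !Hstar, sN, binNl. Qed.

Lemma action_star_un o w u a : star o (un w u) a = un w (star o u a).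
Proof. split_extension. now rewrite iU, !Hstar, sU, bin_unl. Qed.

(* The Axiom 2 word for [(u * v) *bar i(a)] in the extension only involves products of [s u],
   [s v] and [i a], which are the actions of [u] and [v] read back in [A]. *)
Lemma action_star_bin o ob u v a :
  star ob (bin o u v) a = weval (zero A) opp add (atom_fam (F u) (F v) a) (W o ob).
Proof.
  split_extension.
  rewrite (weval_hom _ _ (conj i0 (conj iN (conj iD (conj iU iB))))), Hstar, sB, bin_binl.
  apply weval_ext. intros [] o1 o2; unfold atom_fam, atom_alg, lact, ract; simpl;
  now rewrite ?Hstar, ?bin_circ.
Qed.

Lemma action_fam_zero : fam_eq (@fam_zero C A) (F (zero B)).
Proof. split; intros; simpl; now rewrite ?action_dot0, ?action_star0l. Qed.

Lemma action_fam_add u v : fam_eq (fam_sum (F u) (F v)) (F (add u v)).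
Proof. split; intros; simpl; now rewrite ?action_dotD, ?action_starD. Qed.

Lemma action_fam_bin o u v : fam_eq (fam_prod o (F u) (F v)) (F (bin o u v)).
Proof. split; intros; simpl; now rewrite ?action_dot_bin, ?action_star_bin. Qed.

Lemma action_fam_iter_negp n o u v :
  fam_eq (Nat.iter n (@fam_negp C A) (F (bin o u v))) (F (bin o (Nat.iter n opp u) v)).
Proof.
  induction n as [|n IH]; [apply fam_eq_refl|].
  apply (fam_eq_trans (fam_negp_eq IH)).
  split; intros; simpl; now rewrite ?action_dot_bin, ?binNl, ?action_starN.
Qed.

(* All unary contexts are quantified over because [fam_ctx] pushes negations and unary
   operations down to the generators. *)
Definition represents (x : B) (e : bexpr A) : Prop :=
  forall c, fam_eq (fam_ctx c e) (F (apply_ctx c x)).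

Lemma represents_zero : represents (zero B) BZero.
Proof. intros c. simpl. rewrite apply_ctx_zero. apply action_fam_zero. Qed.

Lemma represents_opp x e : represents x e -> represents (opp x) (BOpp e).
Proof. intros Hxe c. specialize (Hxe (c ++ [None])). now rewrite apply_ctx_app in Hxe. Qed.

Lemma represents_un w x e : represents x e -> represents (un w x) (BUn w e).
Proof. intros Hxe c. specialize (Hxe (c ++ [Some w])). now rewrite apply_ctx_app in Hxe. Qed.

Lemma represents_add x1 x2 e1 e2 :
  represents x1 e1 -> represents x2 e2 -> represents (add x1 x2) (BAdd e1 e2).
Proof.
  intros H1 H2 c. simpl. rewrite apply_ctx_add.
  destruct (Nat.odd (negs c));
    (eapply fam_eq_trans; [apply fam_sum_eq; auto | apply action_fam_add]).
Qed.

Lemma represents_bin o x1 x2 e1 e2 :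
  represents x1 e1 -> represents x2 e2 -> represents (bin o x1 x2) (BBin o e1 e2).
Proof.
  intros H1 H2 c. simpl. rewrite apply_ctx_bin.
  eapply fam_eq_trans; [|apply action_fam_iter_negp].
  induction (negs c) as [|n IH]; simpl.
  - eapply fam_eq_trans; [|apply action_fam_bin]. apply fam_prod_eq; [apply H1 | apply (H2 [])].
  - now apply fam_negp_eq.
Qed.

Definition acts_trivially (k : B) : Prop :=
  (forall ws a, dot (apply_ctx (map Some ws) k) a = a) /\ (forall o a, star o k a = zero A).

Lemma acts_trivially_zero : acts_trivially (zero B).
Proof. split; intros; now rewrite ?apply_ctx_zero, ?action_dot0, ?action_star0l. Qed.

Lemma acts_trivially_opp k : acts_trivially k -> acts_trivially (opp k).
Proof.
  intros [Hd Hs]. split; intros.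
  - rewrite apply_omegas_opp.
    transitivity (dot (apply_ctx (map Some ws) k) (dot (opp (apply_ctx (map Some ws) k)) a)).
    + symmetry. apply Hd.
    + apply action_dotNK.
  - now rewrite action_starN, Hs, opp0.
Qed.

Lemma acts_trivially_add k l : acts_trivially k -> acts_trivially l -> acts_trivially (add k l).
Proof.
  intros [Hd Hs] [Hd' Hs']. split; intros.
  - now rewrite apply_omegas_add, action_dotD, Hd', Hd.
  - now rewrite action_starD, Hs, Hs', add0x.
Qed.

Lemma acts_trivially_un w k : acts_trivially k -> acts_trivially (un w k).
Proof.
  intros [Hd Hs]. split; intros.
  - specialize (Hd (ws ++ [w]) a). now rewrite map_app, apply_ctx_app in Hd.
  - now rewrite action_star_un, Hs, un0.
Qed.

Lemma acts_trivially_binl o k z : acts_trivially k -> acts_trivially (bin o k z).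
Proof.
  intros [_ Hs]. split; intros.
  - now rewrite apply_ctx_bin, action_dot_bin.
  - rewrite action_star_bin.
    transitivity (weval (zero A) opp add (fun _ _ _ => zero A) (W o o0)); [|apply weval_zero].
    apply weval_ext.
    intros [] o1 o2; unfold atom_fam, lact, ract; simpl; now rewrite ?Hs, ?action_star0r.
Qed.

End DerivedAction.

Arguments represents {C A B} dot star x e.
Arguments acts_trivially {C A B} dot star k.

Section Subalgebra.
Context {C : coi} {X : algC C} {P : X -> Prop} (P0 : P (zero X))
  (PN : forall x, P x -> P (opp x)) (PD : forall x y, P x -> P y -> P (add x y))
  (PU : forall w x, P x -> P (un w x)) (PB : forall o x y, P x -> P y -> P (bin o x y)).

Definition sub_alg : algC C :=
  @Alg (O1 C) (O2 C) {x | P x} (exist _ _ P0)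
    (fun x => exist _ _ (PN (proj2_sig x)))
    (fun x y => exist _ _ (PD (proj2_sig x) (proj2_sig y)))
    (fun w x => exist _ _ (PU w (proj2_sig x)))
    (fun o x y => exist _ _ (PB o (proj2_sig x) (proj2_sig y))).

Lemma sub_alg_val_hom : hom (fun x : sub_alg => proj1_sig x).
Proof. now repeat split. Qed.

Lemma sub_alg_models : models X -> models sub_alg.
Proof.
  intros HX l r Hlr v.
  assert (Hval : forall t, proj1_sig (teval v t) = teval (fun n => proj1_sig (v n)) t).
  { induction t; simpl; congruence. }
  apply eq_sig_hprop; [intros; apply proof_irrelevance|].
  rewrite !Hval. now apply HX.
Qed.

End Subalgebra.

Section DirectProduct.
Context {C : coi} `{HC : is_coi C} {A K : algC C} `{HA : models C A} `{HK : models C K}.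

Definition prod_alg : algC C :=
  @Alg (O1 C) (O2 C) (A * K)%type (zero A, zero K)
    (fun x => (opp (fst x), opp (snd x)))
    (fun x y => (add (fst x) (fst y), add (snd x) (snd y)))
    (fun w x => (un w (fst x), un w (snd x)))
    (fun o x y => (bin o (fst x) (fst y), bin o (snd x) (snd y))).

Lemma prod_alg_models : models prod_alg.
Proof.
  intros l r Hlr v.
  assert (Hfst : forall t, fst (teval v t) = teval (fun n => fst (v n)) t).
  { induction t; simpl; congruence. }
  assert (Hsnd : forall t, snd (teval v t) = teval (fun n => snd (v n)) t).
  { induction t; simpl; congruence. }
  apply injective_projections; rewrite ?Hfst, ?Hsnd; [apply HA | apply HK]; exact Hlr.
Qed.

Lemma trivial_derived_action :
  derived_action (fun (_ : K) (a : A) => a) (fun _ _ _ => zero A).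
Proof.
  split; [exact HA|]. split; [exact HK|].
  exists prod_alg, snd, (fun k => (zero A, k)), (fun a => (a, zero K)).
  repeat split; simpl; intros;
    rewrite ?opp0, ?add0x, ?addx0, ?addxN, ?un0, ?bin0l, ?bin0r; trivial.
  - apply prod_alg_models.
  - now exists (zero A, b).
  - congruence.
  - destruct e as [a k]. simpl in *. subst. now exists a.
  - now destruct H as [a' <-].
Qed.

End DirectProduct.

Section Actor.
Context {C : coi} `{HC : is_coi C} {A Act : algC C} {d : A -> Act}
  {dot : Act -> A -> A} {star : O2 C -> Act -> A -> A} (Hact : is_actor d dot star).

Let HD : derived_action dot star := is_actor_derived Hact.
Let HA : models A := proj1 HD.
Let HAct : models Act := proj1 (proj2 HD).
Existing Instances HA HAct.

Lemma represents_gen (g : gen A) : exists x, represents dot star x (BGen g).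
Proof.
  destruct g as [B dotB starB HB b].
  destruct (proj2 (proj2 Hact) B dotB starB HB) as [phi [[Hphi [Hd Hs]] _]].
  exists (phi b). intros c. simpl. rewrite <- (hom_apply_ctx c b Hphi).
  now split; intros; simpl.
Qed.

Lemma bexpr_represented (e : bexpr A) : exists x, represents dot star x e.
Proof.
  induction e as [g| |e [x IH]|e1 [x1 IH1] e2 [x2 IH2]|w e [x IH]|o e1 [x1 IH1] e2 [x2 IH2]].
  - apply represents_gen.
  - exists (zero Act). now apply represents_zero.
  - exists (opp x). now apply represents_opp.
  - exists (add x1 x2). now apply represents_add.
  - exists (un w x). now apply represents_un.
  - exists (bin o x1 x2). now apply represents_bin.
Qed.

Lemma represents_bsim x e : represents dot star x e -> bsim (actor_to_B Hact x) e.
Proof.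
  intros Hxe. split; [|split].
  - intros a. symmetry. apply (Hxe []).
  - intros o a. symmetry. apply (Hxe []).
  - intros ws _ a. symmetry. apply (Hxe (map Some ws)).
Qed.

Lemma represents_actor_to_B x : represents dot star x (actor_to_B Hact x).
Proof. intros c. apply fam_eq_refl. Qed.

Definition actor_kernel : algC C :=
  sub_alg (acts_trivially_zero HD) (acts_trivially_opp HD) (fun k l Hk Hl => acts_trivially_add HD Hk Hl)
    (acts_trivially_un HD) (fun o k l Hk _ => acts_trivially_binl HD o l Hk).

Lemma actor_kernel_models : models actor_kernel.
Proof. apply sub_alg_models, HAct. Qed.

Lemma actor_faithful k : acts_trivially dot star k -> k = zero Act.
Proof.
  intros Hk.
  destruct (proj2 (proj2 Hact) actor_kernel _ _
              (trivial_derived_action (A := A) (HK := actor_kernel_models)))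
    as [phi [_ phi_unique]].
  assert (Hincl : phi = fun x => proj1_sig x).
  { apply phi_unique. split; [apply sub_alg_val_hom|].
    split.
    - intros [u Hu] a. symmetry. apply (proj1 Hu []).
    - intros o [u Hu] a. symmetry. apply (proj2 Hu). }
  assert (Hzero : phi = fun _ => zero Act).
  { apply phi_unique. split; [|split].
    - repeat split; intros; simpl; now rewrite ?opp0, ?add0x, ?un0, ?bin0l.
    - intros u a. symmetry. apply (action_dot0 HD).
    - intros o u a. symmetry. apply (action_star0l HD). }
  rewrite Hincl in Hzero. exact (f_equal (fun f => f (exist _ k Hk : actor_kernel)) Hzero).
Qed.

Lemma actor_to_B_inj x y : bsim (actor_to_B Hact x) (actor_to_B Hact y) -> x = y.
Proof.
  intros (Hd & Hs & Hws). apply sub_eq0, actor_faithful.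
  assert (Hdot : forall ws a, dot (apply_ctx (map Some ws) x) a = dot (apply_ctx (map Some ws) y) a).
  { intros [|w ws]; [exact Hd|]. apply Hws. discriminate. }
  assert (Hstar : forall o a, star o x a = star o y a) by exact Hs.
  split; intros.
  - now rewrite apply_omegas_add, apply_omegas_opp, (action_dotD HD), Hdot, (action_dotNK HD).
  - now rewrite (action_starD HD), (action_starN HD), Hstar, addxN.
Qed.

End Actor.

Theorem proposition3p5 (C : coi) (HC : is_coi C) (A : algC C) (HA : models A)
  (Act : algC C) (d : A -> Act) (dot : Act -> A -> A) (star : O2 C -> Act -> A -> A)
  (Hact : is_actor d dot star) :
  iso_onto_B (actor_to_B Hact).
Proof.
  pose proof (is_actor_derived Hact) as HD.
  pose proof (represents_actor_to_B Hact) as Hrep.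
  split; [apply represents_bsim, (represents_zero HD)|].
  split; [intros x; apply represents_bsim, represents_opp, Hrep|].
  split; [intros x y; apply represents_bsim, (represents_add HD); apply Hrep|].
  split; [intros w x; apply represents_bsim, represents_un, Hrep|].
  split; [intros o x y; apply represents_bsim, (represents_bin HD); apply Hrep|].
  split; [apply actor_to_B_inj|].
  intros e. destruct (bexpr_represented Hact e) as [x Hx].
  exists x. now apply represents_bsim.
Qed.
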